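(* Let $\alpha$ be a partial action datum of $M$ on $X\in\mathscr{C}$ such that the coproducts $\coprod_{m\in M}X$ and $\coprod_{(m,n)\in M\times M}\operatorname{dom}\alpha_n$ exist. Then: (i) if $r\colon\alpha\to\beta$ is a reflection of $\alpha$ in $\mathrm{Act}_M(\mathscr{C})$, with $\beta$ acting on $Y$, then $H_{X,\beta}(r)\colon\psi\to\beta$ is a coequalizer of $p,q\colon\varphi\to\psi$ in $\mathrm{Act}_M(\mathscr{C})$; (ii) if $c\colon\psi\to\beta$ is a coequalizer of $p$ and $q$ in $\mathrm{Act}_M(\mathscr{C})$, then $c\circ u_e\colon\alpha\to\beta$ is a reflection of $\alpha$ in $\mathrm{Act}_M(\mathscr{C})$. In particular, $\alpha$ has a reflection in $\mathrm{Act}_M(\mathscr{C})$ if and only if $p$ and $q$ have a coequalizer in $\mathrm{Act}_M(\mathscr{C})$.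
   Context: $M$ is a monoid with identity $e$ and $\mathscr{C}$ is a category with pullbacks. A partial action datum of $M$ on $X$ assigns to each $m\in M$ an isomorphism class of spans $[\operatorname{dom}\alpha_m,\iota_m,\alpha_m]$ with $\iota_m\colon\operatorname{dom}\alpha_m\to X$ a monomorphism and $\alpha_m\colon\operatorname{dom}\alpha_m\to X$ (isomorphism of spans: an isomorphism of apexes commuting with both legs); representatives are fixed. A global action of $M$ on $Y$ is a datum with $\beta(m)=[Y,\mathrm{id}_Y,\beta_m]$, $\beta_e=\mathrm{id}_Y$, $\beta_n\circ\beta_m=\beta_{nm}$. Given data $\alpha$ on $X$ and $\beta$ on $Y$ with representatives $[\operatorname{dom}\alpha_m,\iota_m,\alpha_m]$, $[\operatorname{dom}\beta_m,\kappa_m,\beta_m]$, a datum morphism $\alpha\to\beta$ is a morphism $f\colon X\to Y$ such that for each $m$ there is $f_m$ with $\kappa_m\circ f_m=f\circ\iota_m$, $\beta_m\circ f_m=f\circ\alpha_m$. $\mathrm{Act}_M(\mathscr{C})$ is the category of global actions with datum morphisms (for global actions these are the $g$ with $g\circ\beta_m=\gamma_m\circ g$). A reflection of $\alpha$ in $\mathrm{Act}_M(\mathscr{C})$ is a datum morphism $r\colon\alpha\to\beta$ with $\beta$ global such that for every datum morphism $f\colon\alpha\to\gamma$ with $\gamma$ global there is a unique datum morphism $f'\colon\beta\to\gamma$ with $f'\circ r=f$. Let $u_m\colon X\to\coprod_{m\in M}X$ and $u_{(m,n)}\colon\operatorname{dom}\alpha_n\to\coprod_{(m,n)}\operatorname{dom}\alpha_n$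 be the coproduct inclusions; $p,q$ are the unique morphisms with $p\circ u_{(m,n)}=u_{mn}\circ\iota_n$, $q\circ u_{(m,n)}=u_m\circ\alpha_n$. $\varphi$ is the global action on $\coprod_{(s,t)}\operatorname{dom}\alpha_t$ with $\varphi_m\circ u_{(s,t)}=u_{(ms,t)}$, and $\psi$ is the global action on $\coprod_s X$ with $\psi_m\circ u_s=u_{ms}$; $p,q$ are morphisms $\varphi\to\psi$ in $\mathrm{Act}_M(\mathscr{C})$. For a global action $\gamma$ on $Z$ and $f\colon X\to Z$, $H_{X,\gamma}(f)$ is the unique morphism $\coprod_m X\to Z$ with $H_{X,\gamma}(f)\circ u_m=\gamma_m\circ f$. *)

Set Implicit Arguments.
Unset Strict Implicit.

Record Category := {
  Ob :> Type;
  Hom : Ob -> Ob -> Type;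
  comp : forall a b c : Ob, Hom b c -> Hom a b -> Hom a c;
  idm : forall a : Ob, Hom a a;
  comp_assoc : forall a b c d (h : Hom c d) (g : Hom b c) (f : Hom a b),
      comp h (comp g f) = comp (comp h g) f;
  comp_id_l : forall a b (f : Hom a b), comp (idm b) f = f;
  comp_id_r : forall a b (f : Hom a b), comp f (idm a) = f
}.
Arguments comp {c0 a b c} g f.
Arguments idm {c0} a.
Arguments Hom {c0} a b.

Record Monoid := {
  mcar :> Type;
  mmul : mcar -> mcar -> mcar;
  munit : mcar;
  mmul_assoc : forall x y z, mmul x (mmul y z) = mmul (mmul x y) z;
  mmul_1l : forall x, mmul munit x = x;
  mmul_1r : forall x, mmul x munit = x
}.
Arguments mmul {m} x y.
Arguments munit {m}.

Section Cat.
Variable C : Category.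

Definition mono (a b : C) (f : Hom a b) : Prop :=
  forall (z : C) (g h : Hom z a), comp f g = comp f h -> g = h.

Definition has_pullbacks : Prop :=
  forall (a b c : C) (f : Hom a c) (g : Hom b c),
    exists (P : C) (p1 : Hom P a) (p2 : Hom P b),
      comp f p1 = comp g p2 /\
      forall (Q : C) (q1 : Hom Q a) (q2 : Hom Q b), comp f q1 = comp g q2 ->
        exists! h : Hom Q P, comp p1 h = q1 /\ comp p2 h = q2.

Definition is_coproduct (I : Type) (F : I -> C) (S : C)
    (u : forall i, Hom (F i) S) : Prop :=
  forall (Z : C) (f : forall i, Hom (F i) Z),
    exists! h : Hom S Z, forall i, comp h (u i) = f i.

Lemma mono_id (a : C) : mono (idm a).
Proof. intros z g h H. rewrite !comp_id_l in H. exact H. Qed.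

Variable M : Monoid.

(* A partial action datum of M on X, given by the fixed representatives
   [dom alpha_m, iota_m, alpha_m] of the span classes. *)
Record pdatum (X : C) := {
  pdom : M -> C;
  pinc : forall m, Hom (pdom m) X;
  pact : forall m, Hom (pdom m) X;
  pinc_mono : forall m, mono (pinc m)
}.

Record gaction (Y : C) := {
  gact : M -> Hom Y Y;
  gact_e : gact munit = idm Y;
  gact_mul : forall m n, comp (gact n) (gact m) = gact (mmul n m)
}.

Definition gdatum (Y : C) (b : gaction Y) : pdatum Y :=
  {| pdom := fun _ => Y; pinc := fun _ => idm Y; pact := gact b;
     pinc_mono := fun _ => @mono_id Y |}.

Definition datum_mor (X Y : C) (a : pdatum X) (b : pdatum Y) (f : Hom X Y) : Prop :=
  forall m, exists fm : Hom (pdom a m) (pdom b m),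
    comp (pinc b m) fm = comp f (pinc a m) /\
    comp (pact b m) fm = comp f (pact a m).

Definition act_mor (Y Z : C) (b : gaction Y) (g : gaction Z) (f : Hom Y Z) : Prop :=
  datum_mor (gdatum b) (gdatum g) f.

Definition is_reflection (X : C) (a : pdatum X) (Y : C) (b : gaction Y)
    (r : Hom X Y) : Prop :=
  datum_mor a (gdatum b) r /\
  forall (Z : C) (g : gaction Z) (f : Hom X Z), datum_mor a (gdatum g) f ->
    exists! f' : Hom Y Z, act_mor b g f' /\ comp f' r = f.

Definition is_coequalizer (S2 S1 : C) (phi : gaction S2) (psi : gaction S1)
    (p q : Hom S2 S1) (Y : C) (b : gaction Y) (c : Hom S1 Y) : Prop :=
  act_mor psi b c /\ comp c p = comp c q /\
  forall (Z : C) (g : gaction Z) (k : Hom S1 Z),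
    act_mor psi g k -> comp k p = comp k q ->
    exists! k' : Hom Y Z, act_mor b g k' /\ comp k' c = k.

End Cat.


Set Implicit Arguments.

(* Write u := u1 for the coproduct injections of S1 = ∐_m X and
   let ψ be the free action on S1.  For a global action γ on Z there is a
   bijection ("transpose") between
     - datum morphisms f : α -> γ, and
     - morphisms of actions k : ψ -> γ with k ∘ p = k ∘ q,
   given by k ↦ k ∘ u_e and f ↦ H_f, the map with H_f ∘ u_m = γ_m ∘ f.
   Equivariant maps out of ψ are determined by their restriction along u_e,
   so the two assignments are mutually inverse.  Under this bijection a
   reflection of α (an initial datum morphism into a global action) corresponds
   exactly to a coequalizer of p and q in Act_M(C) (an initial such k), which
   gives (i) and (ii); the final equivalence follows because H_r always exists
   as S1 is a coproduct. *)

Section Equations.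
Variables (C : Category) (M : Monoid).

Lemma act_mor_iff (Y Z : C) (b : gaction M Y) (g : gaction M Z) (f : Hom Y Z) :
  act_mor b g f <-> forall m, comp (gact g m) f = comp f (gact b m).
Proof.
  unfold act_mor, datum_mor; simpl; split.
  - intros H m. destruct (H m) as [fm [Hinc Hact]].
    rewrite comp_id_l, comp_id_r in Hinc. subst fm. exact Hact.
  - intros H m. exists f. split.
    + rewrite comp_id_l, comp_id_r. reflexivity.
    + apply H.
Qed.

Lemma datum_mor_gdatum_iff (X Z : C) (a : pdatum M X) (g : gaction M Z)
  (f : Hom X Z) :
  datum_mor a (gdatum g) f <->
  forall m, comp (gact g m) (comp f (pinc a m)) = comp f (pact a m).
Proof.
  unfold datum_mor; simpl; split.
  - intros H m. destruct (H m) as [fm [Hinc Hact]].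
    rewrite comp_id_l in Hinc. subst fm. exact Hact.
  - intros H m. exists (comp f (pinc a m)). split.
    + rewrite comp_id_l. reflexivity.
    + apply H.
Qed.

Lemma act_mor_commutes (Y Z : C) (b : gaction M Y) (g : gaction M Z)
  (f : Hom Y Z) :
  act_mor b g f -> forall m, comp (gact g m) f = comp f (gact b m).
Proof. apply act_mor_iff. Qed.

Lemma datum_mor_gdatum_commutes (X Z : C) (a : pdatum M X) (g : gaction M Z)
  (f : Hom X Z) : datum_mor a (gdatum g) f ->
  forall m, comp (gact g m) (comp f (pinc a m)) = comp f (pact a m).
Proof. apply datum_mor_gdatum_iff. Qed.

Lemma act_mor_comp (Y Z W : C) (b : gaction M Y) (g : gaction M Z)
  (w : gaction M W) (f : Hom Y Z) (h : Hom Z W) :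
  act_mor b g f -> act_mor g w h -> act_mor b w (comp h f).
Proof.
  intros Hf Hh. apply act_mor_iff. intros m.
  rewrite comp_assoc, (act_mor_commutes Hh), <- comp_assoc,
    (act_mor_commutes Hf), comp_assoc.
  reflexivity.
Qed.

Lemma coprod_ext (I : Type) (F : I -> C) (S : C) (u : forall i, Hom (F i) S)
  (Hu : is_coproduct u) (Z : C) (h k : Hom S Z) :
  (forall i, comp h (u i) = comp k (u i)) -> h = k.
Proof.
  intros E. destruct (Hu Z (fun i => comp k (u i))) as [x [_ Hx]].
  transitivity x; [symmetry|]; apply Hx; auto.
Qed.

End Equations.

Section Transpose.
Variables (C : Category) (M : Monoid) (X : C) (alpha : pdatum M X).
Variables (S1 : C) (u1 : M -> Hom X S1).
Hypothesis Hu1 : is_coproduct (F := fun _ : M => X) u1.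
Variables (S2 : C) (u2 : forall mn : M * M, Hom (pdom alpha (snd mn)) S2).
Hypothesis Hu2 : is_coproduct (F := fun mn : M * M => pdom alpha (snd mn)) u2.
Variables (p q : Hom S2 S1).
Hypothesis Hp : forall m n : M,
  comp p (u2 (m, n)) = comp (u1 (mmul m n)) (pinc alpha n).
Hypothesis Hq : forall m n : M, comp q (u2 (m, n)) = comp (u1 m) (pact alpha n).
Variable psi : gaction M S1.
Hypothesis Hpsi : forall m s : M, comp (gact psi m) (u1 s) = u1 (mmul m s).

Definition is_transpose (Z : C) (g : gaction M Z) (f : Hom X Z) (H : Hom S1 Z)
  : Prop := forall m, comp H (u1 m) = comp (gact g m) f.

Lemma transpose_exists (Z : C) (g : gaction M Z) (f : Hom X Z) :
  exists H, is_transpose g f H.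
Proof.
  destruct (Hu1 Z (fun m => comp (gact g m) f)) as [H [HH _]]. now exists H.
Qed.

Lemma transpose_unit (Z : C) (g : gaction M Z) (f : Hom X Z) (H : Hom S1 Z) :
  is_transpose g f H -> comp H (u1 munit) = f.
Proof. intros HH. rewrite HH, gact_e, comp_id_l. reflexivity. Qed.

Lemma equivariant_is_transpose (Z : C) (g : gaction M Z) (k : Hom S1 Z) :
  act_mor psi g k -> is_transpose g (comp k (u1 munit)) k.
Proof.
  intros Hk m.
  rewrite comp_assoc, (act_mor_commutes Hk), <- comp_assoc, Hpsi, mmul_1r. reflexivity.
Qed.

Lemma equivariant_ext (Z : C) (g : gaction M Z) (k k' : Hom S1 Z) :
  act_mor psi g k -> act_mor psi g k' ->
  comp k (u1 munit) = comp k' (u1 munit) -> k = k'.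
Proof.
  intros Hk Hk' E. apply (coprod_ext Hu1). intros m.
  rewrite (equivariant_is_transpose Hk m), (equivariant_is_transpose Hk' m), E.
  reflexivity.
Qed.

Lemma transpose_equivariant (Z : C) (g : gaction M Z) (f : Hom X Z)
  (H : Hom S1 Z) : is_transpose g f H -> act_mor psi g H.
Proof.
  intros HH. apply act_mor_iff. intros m. apply (coprod_ext Hu1). intros s.
  rewrite <- comp_assoc, HH, <- comp_assoc, Hpsi, HH, comp_assoc, gact_mul.
  reflexivity.
Qed.

(* The transpose of a datum morphism coequalizes p and q: on the summand
   (m, n) both sides reduce to γ_m ∘ γ_n ∘ f ∘ ι_n = γ_m ∘ f ∘ α_n. *)
Lemma transpose_coequalizes (Z : C) (g : gaction M Z) (f : Hom X Z)
  (H : Hom S1 Z) :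
  datum_mor alpha (gdatum g) f -> is_transpose g f H -> comp H p = comp H q.
Proof.
  intros Hdatum HH. pose proof (datum_mor_gdatum_commutes Hdatum) as Hf.
  apply (coprod_ext Hu2). intros [m n].
  pose proof (Hp m n) as Ep; pose proof (Hq m n) as Eq; cbn [snd] in Ep, Eq |- *.
  rewrite <- !comp_assoc, Ep, Eq, !comp_assoc, !HH.
  rewrite <- (gact_mul g n m), <- !comp_assoc, Hf. reflexivity.
Qed.

(* Conversely, the restriction of an equivariant arrow coequalizing p and q is
   a datum morphism: compare both sides on the summand (e, m). *)
Lemma restriction_datum_mor (Z : C) (g : gaction M Z) (k : Hom S1 Z) :
  act_mor psi g k -> comp k p = comp k q ->
  datum_mor alpha (gdatum g) (comp k (u1 munit)).
Proof.
  intros Hk Hpq. apply datum_mor_gdatum_iff. intros m.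
  assert (E := f_equal (fun h => comp h (u2 (munit, m))) Hpq).
  pose proof (Hp munit m) as Ep; pose proof (Hq munit m) as Eq.
  cbn [snd] in Ep, Eq, E |- *.
  rewrite <- !comp_assoc, Ep, Eq, mmul_1l, !comp_assoc in E.
  rewrite (equivariant_is_transpose Hk m) in E. rewrite comp_assoc. exact E.
Qed.

(* The action φ on S2 only serves to place p, q in Act_M(C); the universal
   property of their coequalizer does not depend on it (nor on pullbacks). *)
Variable phi : gaction M S2.

Lemma reflection_transpose_coequalizer (Y : C) (beta : gaction M Y)
  (r : Hom X Y) (H : Hom S1 Y) :
  is_reflection alpha beta r -> is_transpose beta r H ->
  is_coequalizer phi psi p q beta H.
Proof.
  intros [Hr Huniv] HH.
  assert (HHe : act_mor psi beta H) by exact (transpose_equivariant HH).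
  split; [exact HHe|]. split; [exact (transpose_coequalizes Hr HH)|].
  intros Z g k Hk Hpq.
  destruct (Huniv Z g _ (restriction_datum_mor Hk Hpq))
    as [f' [[Hf'e Hf'r] Hf'uniq]].
  exists f'. split.
  - split; [exact Hf'e|].
    apply (equivariant_ext (act_mor_comp HHe Hf'e) Hk).
    rewrite <- comp_assoc, (transpose_unit HH). exact Hf'r.
  - intros k'' [Hk''e Hk''c]. apply Hf'uniq. split; [exact Hk''e|].
    rewrite <- Hk''c, <- comp_assoc, (transpose_unit HH). reflexivity.
Qed.

Lemma coequalizer_restriction_reflection (Y : C) (beta : gaction M Y)
  (c : Hom S1 Y) :
  is_coequalizer phi psi p q beta c ->
  is_reflection alpha beta (comp c (u1 munit)).
Proof.
  intros [Hce [Hcpq Huniv]]. split; [exact (restriction_datum_mor Hce Hcpq)|].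
  intros Z g f Hf.
  destruct (transpose_exists g f) as [K HK].
  destruct (Huniv Z g K (transpose_equivariant HK) (transpose_coequalizes Hf HK))
    as [k' [[Hk'e Hk'c] Hk'uniq]].
  exists k'. split.
  - split; [exact Hk'e|].
    rewrite comp_assoc, Hk'c. exact (transpose_unit HK).
  - intros f'' [Hf''e Hf''r]. apply Hk'uniq. split; [exact Hf''e|].
    apply (equivariant_ext (act_mor_comp Hce Hf''e) (transpose_equivariant HK)).
    rewrite <- comp_assoc, Hf''r, (transpose_unit HK). reflexivity.
Qed.

End Transpose.

Theorem mainTheorem15 (C : Category) (HC : has_pullbacks C) (M : Monoid)
  (X : C) (alpha : pdatum M X)
  (S1 : C) (u1 : M -> Hom X S1)
  (Hu1 : is_coproduct (F := fun _ : M => X) u1)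
  (S2 : C) (u2 : forall mn : M * M, Hom (pdom alpha (snd mn)) S2)
  (Hu2 : is_coproduct (F := fun mn : M * M => pdom alpha (snd mn)) u2)
  (p q : Hom S2 S1)
  (Hp : forall m n : M, comp p (u2 (m, n)) = comp (u1 (mmul m n)) (pinc alpha n))
  (Hq : forall m n : M, comp q (u2 (m, n)) = comp (u1 m) (pact alpha n))
  (phi : gaction M S2)
  (Hphi : forall m s t : M, comp (gact phi m) (u2 (s, t)) = u2 (mmul m s, t))
  (psi : gaction M S1)
  (Hpsi : forall m s : M, comp (gact psi m) (u1 s) = u1 (mmul m s)) :
  (forall (Y : C) (beta : gaction M Y) (r : Hom X Y),
      is_reflection alpha beta r ->
      forall H : Hom S1 Y, (forall m : M, comp H (u1 m) = comp (gact beta m) r) ->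
        is_coequalizer phi psi p q beta H)
  /\
  (forall (Y : C) (beta : gaction M Y) (c : Hom S1 Y),
      is_coequalizer phi psi p q beta c ->
      is_reflection alpha beta (comp c (u1 munit)))
  /\
  ((exists (Y : C) (beta : gaction M Y) (r : Hom X Y), is_reflection alpha beta r)
   <->
   (exists (Y : C) (beta : gaction M Y) (c : Hom S1 Y),
      is_coequalizer phi psi p q beta c)).
Proof.
  split; [|split].
  - intros Y beta r Hr H HH.
    eapply reflection_transpose_coequalizer; eassumption.
  - intros Y beta c Hc.
    eapply coequalizer_restriction_reflection; eassumption.
  - split.
    + intros [Y [beta [r Hr]]].
      destruct (transpose_exists Hu1 beta r) as [H HH].
      exists Y, beta, H. eapply reflection_transpose_coequalizer; eassumption.
    + intros [Y [beta [c Hc]]].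
      exists Y, beta, (comp c (u1 munit)).
      eapply coequalizer_restriction_reflection; eassumption.
Qed.
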